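(* Let $\mathcal{H}$ be an $n$-dimensional (real or complex) Hilbert space, let $F=\{f_i\}_{i=1}^N$ be a frame for $\mathcal{H}$ with frame operator $S_F$, and let $\{q_i\}_{i=1}^N$ be the weight number sequence associated with a probability sequence $\{p_i\}_{i=1}^N$. Let $l=\max_{1\le i\le N}\{q_i\|S_F^{-1/2}f_i\|^2+q_i\|f_i\|\,\|S_F^{-1}f_i\|\}$, $\Lambda_1=\{i: q_i\|S_F^{-1/2}f_i\|^2+q_i\|f_i\|\,\|S_F^{-1}f_i\|=l\}$, $\Lambda_2=\{1,\dots,N\}\setminus\Lambda_1$, and $H_j=\operatorname{span}\{f_i:i\in\Lambda_j\}$ for $j=1,2$. If $H_1\cap H_2=\{0\}$ and $\{f_i\}_{i\in\Lambda_1}$ is linearly independent, then $S_F^{-1}F\in\Delta_F^{(1)}$. Moreover, if in addition $N>n$, then $S_F^{-1}F$ is not the unique 1-erasure PASOD-frame of $F$.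
   Context: A finite sequence $F=\{f_i\}_{i=1}^N$ in $\mathcal{H}$ is a frame if there are $A,B>0$ with $A\|f\|^2\le\sum_{i=1}^N|\langle f,f_i\rangle|^2\le B\|f\|^2$ for all $f$. The frame operator is $S_Ff=\sum_{i=1}^N\langle f,f_i\rangle f_i$ (positive invertible) and the canonical dual is $S_F^{-1}F=\{S_F^{-1}f_i\}_{i=1}^N$. A frame $G=\{g_i\}_{i=1}^N$ is a dual of $F$ if $f=\sum_i\langle f,f_i\rangle g_i=\sum_i\langle f,g_i\rangle f_i$ for all $f$. A probability sequence is $\{p_i\}_{i=1}^N$ with $0\le p_i\le1$, $\sum p_i=1$; weight numbers $q_i=\frac{\sum_{j} p_j}{\sum_{j} p_j-p_i}\cdot\frac{N-1}{n}$. For $\Lambda\subseteq\{1,\dots,N\}$ the error operator is $E_{\Lambda,(F,G)}f=\sum_{i\in\Lambda}q_i\langle f,f_i\rangle g_i$. Set $\mathcal{A}_P^{(1)}(F,G)=\max_{|\Lambda|=1}\frac{\|E_{\Lambda,(F,G)}\|+\rho(E_{\Lambda,(F,G)})}{2}$ (operator norm and spectral radius). $\Delta_F^{(1)}$ is the set of duals $G$ of $F$ minimizing $\mathcal{A}_P^{(1)}(F,\cdot)$ over all duals of $F$ (1-erasure PASOD-frames of $F$). *)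

From HB Require Import structures.
From mathcomp Require Import all_boot all_order all_algebra.
From mathcomp Require Import complex.
From mathcomp Require Import boolp classical_sets reals.
Set Implicit Arguments. Unset Strict Implicit. Unset Printing Implicit Defensive.
Import Order.TTheory GRing.Theory Num.Theory.
Local Open Scope ring_scope.

Section FrameDefs.
Variable R : realType.
Local Notation C := (R[i]).

(* The Hilbert space: C^n (isreal = false) or R^n seen inside C^n (isreal = true). *)
Definition realc (z : C) : bool := complex.Im z == 0.
Definition inH {n : nat} (isreal : bool) (v : 'cV[C]_n) : bool :=
  isreal ==> [forall k, realc (v k 0)].
Definition scal (isreal : bool) (c : C) : bool := isreal ==> realc c.

Definition ctr {m p : nat} (A : 'M[C]_(m, p)) : 'M[C]_(p, m) := map_mx conjc A^T.

Definition dot {n : nat} (u v : 'cV[C]_n) : C := \sum_k u k 0 * conjc (v k 0).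
Definition vnorm {n : nat} (u : 'cV[C]_n) : R := Num.sqrt (\sum_k Normc.normc (u k 0) ^+ 2).

Definition is_frame {n N : nat} (isreal : bool) (F : 'I_N -> 'cV[C]_n) : Prop :=
  (forall i, inH isreal (F i)) /\
  exists A B : R, 0 < A /\ 0 < B /\
    forall f : 'cV[C]_n, inH isreal f ->
      A * vnorm f ^+ 2 <= \sum_i Normc.normc (dot f (F i)) ^+ 2 <= B * vnorm f ^+ 2.

(* frame operator S_F f = sum_i <f, f_i> f_i, as a matrix *)
Definition frameop {n N : nat} (F : 'I_N -> 'cV[C]_n) : 'M[C]_n :=
  \sum_i (F i *m ctr (F i)).

Definition candual {n N : nat} (F : 'I_N -> 'cV[C]_n) : 'I_N -> 'cV[C]_n :=
  fun i => invmx (frameop F) *m F i.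

Definition is_dual {n N : nat} (isreal : bool) (F G : 'I_N -> 'cV[C]_n) : Prop :=
  is_frame isreal G /\
  forall f : 'cV[C]_n, inH isreal f ->
    f = \sum_i dot f (F i) *: G i /\ f = \sum_i dot f (G i) *: F i.

Definition is_prob_seq {N : nat} (p : 'I_N -> R) : Prop :=
  (forall i, 0 <= p i <= 1) /\ \sum_i p i = 1.

Definition weight {N : nat} (n : nat) (p : 'I_N -> R) (i : 'I_N) : R :=
  (\sum_j p j) / (\sum_j p j - p i) * ((N - 1)%:R / n%:R).

(* error operator E_{Lambda,(F,G)} f = sum_{i in Lambda} q_i <f, f_i> g_i *)
Definition errop {n N : nat} (q : 'I_N -> R) (F G : 'I_N -> 'cV[C]_n)
  (L : {set 'I_N}) : 'M[C]_n :=
  \sum_(i in L) (Complex (q i) 0) *: (G i *m ctr (F i)).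

Definition opnorm {n : nat} (isreal : bool) (A : 'M[C]_n) : R :=
  sup (fun r : R => exists2 f : 'cV[C]_n, inH isreal f /\ vnorm f <= 1 &
                                            r = vnorm (A *m f)).

Definition specrad {n : nat} (A : 'M[C]_n) : R :=
  sup (fun r : R => exists2 a : C, eigenvalue A a & r = Normc.normc a).

Definition AP1 {n N : nat} (isreal : bool) (q : 'I_N -> R) (F G : 'I_N -> 'cV[C]_n) : R :=
  \big[Num.max/0]_(L : {set 'I_N} | #|L| == 1%N)
     ((opnorm isreal (errop q F G L) + specrad (errop q F G L)) / 2).

Definition PASOD1 {n N : nat} (isreal : bool) (q : 'I_N -> R) (F G : 'I_N -> 'cV[C]_n) : Prop :=
  is_dual isreal F G /\
  forall G' : 'I_N -> 'cV[C]_n, is_dual isreal F G' -> AP1 isreal q F G <= AP1 isreal q F G'.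

Definition psd {n : nat} (P : 'M[C]_n) : Prop :=
  ctr P = P /\ forall v : 'cV[C]_n, 0 <= (ctr v *m P *m v) 0 0.

Definition inspan {n N : nat} (isreal : bool) (F : 'I_N -> 'cV[C]_n)
  (L : {set 'I_N}) (v : 'cV[C]_n) : Prop :=
  exists c : 'I_N -> C, (forall i, scal isreal (c i)) /\ v = \sum_(i in L) c i *: F i.

Definition linindep {n N : nat} (isreal : bool) (F : 'I_N -> 'cV[C]_n)
  (L : {set 'I_N}) : Prop :=
  forall c : 'I_N -> C, (forall i, scal isreal (c i)) ->
    \sum_(i in L) c i *: F i = 0 -> forall i, i \in L -> c i = 0.

End FrameDefs.

(* Erasing the single vector f_i costs a dual G exactly
   q_i (||g_i|| ||f_i|| + |<g_i, f_i>|) / 2, the mean of the operator norm and the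
   spectral radius of a rank-one operator; for the canonical dual this is val_i / 2,
   so A_P^(1)(F, S^-1 F) = l / 2.  Any dual G differs from S^-1 F by a family u with
   sum_i <f, u_i> f_i = 0 for all f; since H1 and H2 meet trivially and the f_i,
   i in L1, are independent, every such relation vanishes on L1.  Hence G agrees with
   S^-1 F on L1 and already pays l / 2 there.  When N > n there is a nontrivial
   relation sum_i c_i f_i = 0, necessarily zero on L1, and adding e c_i^* h to the
   canonical dual gives another dual whose costs outside L1 stay below l / 2 for
   e > 0 small enough. *)

From HB Require Import structures.
From mathcomp Require Import all_boot all_order all_algebra.
From mathcomp Require Import complex.
From mathcomp Require Import ring lra.
From mathcomp Require Import boolp classical_sets reals.
Import Order.TTheory GRing.Theory Num.Theory.
Local Open Scope ring_scope.

Set Implicit Arguments. Unset Strict Implicit. Unset Printing Implicit Defensive.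

Lemma sup_eq_max (R : realType) (E : set R) m :
  E m -> (forall r, E r -> r <= m) -> sup E = m.
Proof.
move=> Em ub; apply/le_anti/andP; split; first by apply: ge_sup; [exists m | move=> r /ub].
by apply: ub_le_sup => //; exists m => r /ub.
Qed.

Lemma sup_eq0 (R : realType) (E : set R) : (forall r, E r -> r = 0) -> sup E = 0.
Proof.
move=> E0; have [[r Er]|noE] := pselect (exists r, E r).
  by apply: sup_eq_max; [rewrite -(E0 r Er) | move=> s /E0 ->].
by rewrite (_ : E = set0) ?sup0 //; apply/seteqP; split => x // Ex; case: noE; exists x.
Qed.

Lemma unitmx_of_ker0 (K : fieldType) n (A : 'M[K]_n) :
  (forall v : 'cV_n, A *m v = 0 -> v = 0) -> A \in unitmx.
Proof.
move=> ker0; rewrite -unitmx_tr unitmxE unitfE; apply/negP => /det0P [v vn0 vA].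
have /ker0 /(congr1 trmx) : A *m v^T = 0 by rewrite -[A]trmxK -trmx_mul vA trmx0.
by rewrite trmxK trmx0 => v0; rewrite v0 eqxx in vn0.
Qed.

Lemma exists_nontrivial_relation (K : fieldType) n N (g : 'I_N -> 'cV[K]_n) : (n < N)%N ->
  exists c : 'I_N -> K, (exists i, c i != 0) /\ \sum_i c i *: g i = 0.
Proof.
move=> nN; pose M : 'M[K]_(N, n) := \matrix_(i, k) g i k 0.
have /negbTE Mfree : ~~ row_free M.
  by rewrite -row_leq_rank -ltnNge (leq_ltn_trans (rank_leq_col M)).
pose w := nz_row (kermx M).
have w0 : w != 0 by rewrite nz_row_eq0 kermx_eq0 Mfree.
have wM : w *m M = 0 by apply/sub_kermxP; exact: nz_row_sub.
exists (fun i => w 0 i); split.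
  apply/existsP; apply: contraR w0 => /existsPn wi0; apply/eqP/rowP => i.
  by move: (wi0 i); rewrite negbK mxE => /eqP.
apply/matrixP => k z; move/matrixP: wM => /(_ 0 k); rewrite !mxE => wMk.
rewrite (ord1 z) summxE -[RHS]wMk.
by apply: eq_bigr => i _; rewrite !mxE.
Qed.

Lemma exists_pos_mul_le (R : realFieldType) (I : finType) (P : pred I) (a b : I -> R) :
  (forall i, P i -> 0 < a i) -> exists2 e : R, 0 < e & forall i, P i -> e * b i <= a i.
Proof.
move=> a0; pose e := \big[Num.min/1]_(i | P i) (a i / (`|b i| + 1)).
have b1 i : 0 < `|b i| + 1 by rewrite ltr_wpDl.
have e0 : 0 < e.
  by rewrite /e; elim/big_ind: _ => // [x y x0 y0|i Pi]; rewrite ?lt_min ?x0 ?y0 ?divr_gt0 ?a0.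
exists e => // i Pi.
have ea : e <= a i / (`|b i| + 1) by exact: bigmin_le_cond.
apply: le_trans (_ : e * (`|b i| + 1) <= _); last by rewrite -ler_pdivlMr.
by rewrite ler_pM2l // ler_wpDr // real_ler_norm ?num_real.
Qed.

Section ComplexFrames.
Variable R : realType.
Local Notation C := (R[i]).
Local Notation nc := (@Normc.normc R).
Local Notation rc := (real_complex R).

Lemma normcE (z : C) : (nc z)%:C%C = `|z|.
Proof. by case: z => a b; rewrite normc_def. Qed.

Lemma mulcJ (z : C) : z * conjc z = (nc z ^+ 2)%:C%C.
Proof. by rewrite rmorphXn /= normcE sqr_normc. Qed.

Lemma normc_ge0 (z : C) : 0 <= nc z.
Proof. by case: z => a b; rewrite /= sqrtr_ge0. Qed.

Lemma normc_real (x : R) : nc x%:C%C = `|x|.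
Proof. by rewrite /= expr0n /= addr0 sqrtr_sqr. Qed.

Lemma normc_conj (z : C) : nc (conjc z) = nc z.
Proof. by case: z => a b /=; rewrite sqrrN. Qed.

Lemma ctrM m p r (A : 'M[C]_(m, p)) (B : 'M[C]_(p, r)) : ctr (A *m B) = ctr B *m ctr A.
Proof. by rewrite /ctr trmx_mul map_mxM. Qed.

Lemma ctrK m p (A : 'M[C]_(m, p)) : ctr (ctr A) = A.
Proof. by apply/matrixP => i j; rewrite !mxE conjcK. Qed.

Lemma ctr_sum m p (I : finType) (P : pred I) (A : I -> 'M[C]_(m, p)) :
  ctr (\sum_(i | P i) A i) = \sum_(i | P i) ctr (A i).
Proof. by rewrite /ctr raddf_sum /= map_mx_sum. Qed.

Lemma ctr_invmx m (A : 'M[C]_m) : ctr (invmx A) = invmx (ctr A).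
Proof. by rewrite /ctr trmx_inv map_invmx. Qed.

Lemma dotE n (u v : 'cV[C]_n) : dot u v = (ctr v *m u) 0 0.
Proof. by rewrite /dot !mxE; apply: eq_bigr => k _; rewrite !mxE mulrC. Qed.

Lemma ctr_mulmx_col n (f x : 'cV[C]_n) : ctr f *m x = (dot x f)%:M.
Proof. by rewrite [LHS]mx11_scalar dotE. Qed.

Lemma dotC n (u v : 'cV[C]_n) : dot v u = conjc (dot u v).
Proof. by rewrite /dot rmorph_sum; apply: eq_bigr => k _; rewrite rmorphM /= conjcK mulrC. Qed.

Lemma dotDl n (u v w : 'cV[C]_n) : dot (u + v) w = dot u w + dot v w.
Proof. by rewrite !dotE mulmxDr mxE. Qed.

Lemma dotZl n a (u w : 'cV[C]_n) : dot (a *: u) w = a * dot u w.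
Proof. by rewrite !dotE -scalemxAr mxE. Qed.

Lemma dotBl n (u v w : 'cV[C]_n) : dot (u - v) w = dot u w - dot v w.
Proof. by rewrite dotDl -scaleN1r dotZl mulN1r. Qed.

Lemma dot_suml n (I : finType) (P : pred I) (u : I -> 'cV[C]_n) w :
  dot (\sum_(i | P i) u i) w = \sum_(i | P i) dot (u i) w.
Proof. by rewrite dotE mulmx_sumr summxE; apply: eq_bigr => i _; rewrite dotE. Qed.

Lemma dotDr n (u v w : 'cV[C]_n) : dot w (u + v) = dot w u + dot w v.
Proof. by rewrite dotC dotDl rmorphD /= -!dotC. Qed.

Lemma dotZr n a (u w : 'cV[C]_n) : dot w (a *: u) = conjc a * dot w u.
Proof. by rewrite dotC dotZl rmorphM /= -dotC. Qed.

Lemma dotBr n (u v w : 'cV[C]_n) : dot w (u - v) = dot w u - dot w v.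
Proof. by rewrite dotC dotBl rmorphB /= -!dotC. Qed.

Lemma dot0l n (w : 'cV[C]_n) : dot 0 w = 0.
Proof. by rewrite dotE mulmx0 mxE. Qed.

Lemma dot0r n (w : 'cV[C]_n) : dot w 0 = 0.
Proof. by rewrite dotC dot0l conjc0. Qed.

Lemma dot_mulmxl n (M : 'M[C]_n) (u v : 'cV[C]_n) : dot (M *m u) v = dot u (ctr M *m v).
Proof. by rewrite !dotE ctrM ctrK mulmxA. Qed.

Lemma dot_mulmxr n (M : 'M[C]_n) (u v : 'cV[C]_n) : dot u (M *m v) = dot (ctr M *m u) v.
Proof. by rewrite dot_mulmxl ctrK. Qed.

Lemma vnorm_ge0 n (u : 'cV[C]_n) : 0 <= vnorm u.
Proof. exact: sqrtr_ge0. Qed.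

Lemma vnorm_sqr n (u : 'cV[C]_n) : vnorm u ^+ 2 = \sum_k nc (u k 0) ^+ 2.
Proof. by rewrite sqr_sqrtr // sumr_ge0 // => k _; rewrite sqr_ge0. Qed.

Lemma dotvv n (u : 'cV[C]_n) : dot u u = (vnorm u ^+ 2)%:C%C.
Proof. by rewrite vnorm_sqr rmorph_sum; apply: eq_bigr => k _; rewrite mulcJ. Qed.

Lemma normc_dotvv n (u : 'cV[C]_n) : nc (dot u u) = vnorm u ^+ 2.
Proof. by rewrite dotvv normc_real ger0_norm ?sqr_ge0. Qed.

Lemma vnorm_eq0 n (u : 'cV[C]_n) : vnorm u = 0 -> u = 0.
Proof.
move=> u0; have /psumr_eq0P sum0 : \sum_k nc (u k 0) ^+ 2 = 0.
  by rewrite -vnorm_sqr u0 expr0n.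
apply/matrixP => k j; rewrite (ord1 j) mxE; apply: Normc.eq0_normc.
by apply/eqP; rewrite -sqrf_eq0; apply/eqP/sum0 => // i _; rewrite sqr_ge0.
Qed.

Lemma dotvv_eq0 n (u : 'cV[C]_n) : dot u u = 0 -> u = 0.
Proof.
rewrite dotvv -(rmorph0 rc) => /complexI /eqP.
by rewrite sqrf_eq0 => /eqP /vnorm_eq0.
Qed.

Lemma vnorm0 n : vnorm (0 : 'cV[C]_n) = 0.
Proof. by apply/eqP; rewrite -sqrf_eq0 -normc_dotvv dot0l Normc.normc0. Qed.

Lemma vnormZ n a (u : 'cV[C]_n) : vnorm (a *: u) = nc a * vnorm u.
Proof.
apply/eqP; rewrite -(@eqrXn2 _ 2) ?mulr_ge0 ?normc_ge0 ?vnorm_ge0 //.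
rewrite -normc_dotvv dotZl dotZr mulrA mulcJ Normc.normcM normc_real normc_dotvv.
by rewrite ger0_norm ?sqr_ge0 // exprMn.
Qed.

Lemma dot_ge0 n (u : 'cV[C]_n) : 0 <= dot u u.
Proof. by rewrite dotvv lecR sqr_ge0. Qed.

Lemma CauchySchwarz n (u v : 'cV[C]_n) : nc (dot u v) <= vnorm u * vnorm v.
Proof.
have [v0|vn0] := eqVneq (vnorm v) 0.
  by rewrite (vnorm_eq0 v0) dot0r Normc.normc0 vnorm0 mulr0.
suff : dot u v * conjc (dot u v) <= dot u u * dot v v.
  rewrite mulcJ !dotvv -rmorphM lecR -exprMn.
  by rewrite ler_pXn2r // ?nnegrE ?normc_ge0 // mulr_ge0 // vnorm_ge0.
set a := dot u v; set b := dot v v.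
have b0 : 0 < b by rewrite /b dotvv ltcR exprn_gt0 // lt0r vn0 vnorm_ge0.
have bJ : conjc b = b by rewrite /b dotvv conjc_real.
have := dot_ge0 (u - (a / b) *: v).
rewrite dotBl !dotBr !dotZl !dotZr (dotC u v) -/a -/b.
rewrite rmorphM /= conjc_inv bJ.
have bn0 : b != 0 by rewrite lt0r_neq0.
have -> : dot u u - conjc a / b * a - (a / b * conjc a - a / b * (conjc a / b * b)) =
          dot u u - a * conjc a / b by field.
by rewrite subr_ge0 ler_pdivrMr.
Qed.

Lemma vnormD n (u v : 'cV[C]_n) : vnorm (u + v) <= vnorm u + vnorm v.
Proof.
rewrite -(ler_pXn2r (_ : 0 < 2)%N) ?nnegrE ?addr_ge0 ?vnorm_ge0 //.
rewrite -lecR -dotvv dotDl !dotDr [dot v u]dotC !dotvv.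
have ReB : dot u v + conjc (dot u v) <= (2 * (vnorm u * vnorm v))%:C%C.
  rewrite addcJ rmorphM rmorph_nat /= ler_pM2l ?ltr0n //.
  apply: le_trans (_ : `|complex.Re (dot u v)|%:C%C <= _); first by rewrite lecR ler_norm.
  by apply: le_trans (normc_ge_Re _) _; rewrite -normcE lecR CauchySchwarz.
rewrite sqrrD !rmorphD /= -!addrA lerD2l !addrA lerD2r.
by apply: le_trans ReB _; rewrite rmorphM rmorph_nat /= mulr_natl mulr2n.
Qed.

Definition realmx m p (M : 'M[C]_(m, p)) := exists M' : 'M[R]_(m, p), M = map_mx rc M'.

Lemma realmxM m p r (A : 'M[C]_(m, p)) (B : 'M[C]_(p, r)) :
  realmx A -> realmx B -> realmx (A *m B).
Proof. by move=> [A' ->] [B' ->]; exists (A' *m B'); rewrite map_mxM. Qed.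

Lemma realmxD m p (A B : 'M[C]_(m, p)) : realmx A -> realmx B -> realmx (A + B).
Proof. by move=> [A' ->] [B' ->]; exists (A' + B'); rewrite map_mxD. Qed.

Lemma realmxB m p (A B : 'M[C]_(m, p)) : realmx A -> realmx B -> realmx (A - B).
Proof. by move=> [A' ->] [B' ->]; exists (A' - B'); rewrite map_mxB. Qed.

Lemma realmxZ m p (x : R) (A : 'M[C]_(m, p)) : realmx A -> realmx (x%:C%C *: A).
Proof. by move=> [A' ->]; exists (x *: A'); rewrite map_mxZ. Qed.

Lemma realmx_sum m p (I : finType) (P : pred I) (A : I -> 'M[C]_(m, p)) :
  (forall i, P i -> realmx (A i)) -> realmx (\sum_(i | P i) A i).
Proof.
move=> AR; elim/big_rec: _ => [|i B Pi BR]; first by exists 0; rewrite map_mx0.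
exact: realmxD (AR i Pi) BR.
Qed.

Lemma realmx_ctr m p (A : 'M[C]_(m, p)) : realmx A -> realmx (ctr A).
Proof. by move=> [A' ->]; exists A'^T; apply/matrixP => i j; rewrite !mxE conjc_real. Qed.

Lemma realmx_invmx m (A : 'M[C]_m) : realmx A -> realmx (invmx A).
Proof. by move=> [A' ->]; exists (invmx A'); rewrite map_invmx. Qed.

Lemma realcP (z : C) : reflect (exists x : R, z = x%:C%C) (realc z).
Proof.
apply: (iffP eqP) => [|[x ->] //]; case: z => a b /= ->.
by exists a.
Qed.

Lemma inHP isreal n (v : 'cV[C]_n) : inH isreal v <-> (isreal -> realmx v).
Proof.
rewrite /inH; case: isreal => /=; split => // [/forallP vR _|/(_ isT) [v' ->]].
  exists (map_mx (@complex.Re R) v); apply/matrixP => k j; rewrite (ord1 j) !mxE.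
  by have /realcP [x ->] := vR k.
by apply/forallP => k; rewrite mxE; apply/realcP; exists (v' k 0).
Qed.

Lemma scalP isreal (c : C) : scal isreal c <-> (isreal -> exists x : R, c = x%:C%C).
Proof. by rewrite /scal; case: isreal => /=; split => // [/realcP|/(_ isT)/realcP]. Qed.

Lemma scal_real isreal (x : R) : scal isreal x%:C%C.
Proof. by apply/scalP => _; exists x. Qed.

Lemma scalN isreal (c : C) : scal isreal c -> scal isreal (- c).
Proof. by move/scalP=> cR; apply/scalP => /cR [x ->]; exists (- x); rewrite rmorphN. Qed.

Lemma scalM isreal (c d : C) : scal isreal c -> scal isreal d -> scal isreal (c * d).
Proof.
move=> /scalP cR /scalP dR; apply/scalP => r.
by have [[x ->] [y ->]] := (cR r, dR r); exists (x * y); rewrite rmorphM.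
Qed.

Lemma scal_dot isreal n (u v : 'cV[C]_n) :
  inH isreal u -> inH isreal v -> scal isreal (dot u v).
Proof.
move=> /inHP uR /inHP vR; apply/scalP => r; rewrite dotE.
by have [A ->] := realmxM (realmx_ctr (vR r)) (uR r); exists (A 0 0); rewrite mxE.
Qed.

Section RankOne.
Variables (n : nat) (a : R) (g f : 'cV[C]_n).
Hypothesis a_ge0 : 0 <= a.

Local Notation M := (a%:C%C *: (g *m ctr f)).

Let normc_a : nc a%:C%C = a.
Proof. by rewrite normc_real ger0_norm. Qed.

Lemma opnorm_rank1 isreal : inH isreal f -> opnorm isreal M = a * vnorm g * vnorm f.
Proof.
move=> Hf.
have Mx x : vnorm (M *m x) = a * nc (dot x f) * vnorm g.
  by rewrite -scalemxAl -mulmxA ctr_mulmx_col mul_mx_scalar scalerA vnormZ Normc.normcM normc_a.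
apply: sup_eq_max => [|r [x [_ x1] ->]]; last first.
  rewrite Mx mulrAC ler_wpM2l ?mulr_ge0 ?vnorm_ge0 //.
  by apply: le_trans (CauchySchwarz x f) _; rewrite ler_piMl ?vnorm_ge0.
exists ((vnorm f)^-1%:C%C *: f).
  split; first by apply/inHP => r; apply: realmxZ; move/inHP: Hf; apply.
  rewrite vnormZ normc_real ger0_norm ?invr_ge0 ?vnorm_ge0 //.
  have [->|fn0] := eqVneq (vnorm f) 0; first by rewrite mulr0.
  by rewrite mulVf.
apply/esym; rewrite Mx dotZl Normc.normcM normc_real normc_dotvv ger0_norm ?invr_ge0 ?vnorm_ge0 //.
have [->|fn0] := eqVneq (vnorm f) 0; first by rewrite expr0n /= !(mulr0, mul0r).
by rewrite expr2 mulKf // mulrAC.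
Qed.

Lemma specrad_rank1 : specrad M = a * nc (dot g f).
Proof.
have eigM l : eigenvalue M l -> l = 0 \/ l = a%:C%C * dot g f.
  move=> /eigenvalueP [v vM vn0]; have [->|ln0] := eqVneq l 0; [by left | right].
  pose s := (v *m g) 0 0.
  have vMf : v *m M = (a%:C%C * s) *: ctr f.
    by rewrite -scalemxAr mulmxA [v *m g]mx11_scalar mul_scalar_mx scalerA.
  have vE : v = (l^-1 * (a%:C%C * s)) *: ctr f by rewrite -scalerA -vMf vM scalerA mulVf ?scale1r.
  have sn0 : s != 0.
    by apply: contra vn0 => /eqP s0; rewrite vE s0 !mulr0 scale0r.
  have sE : s = l^-1 * (a%:C%C * s) * dot g f by rewrite {1}/s {1}vE -scalemxAl mxE -dotE.
  apply: (mulIf sn0); move/(congr1 (fun x => l * x)): sE.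
  by rewrite !mulrA mulfV // mul1r => ->; rewrite mulrAC.
have [z0|zn0] := eqVneq (a * nc (dot g f)) 0.
  apply: (etrans _ (esym z0)); apply: sup_eq0 => r [l /eigM [->|->] ->]; first exact: Normc.normc0.
  by rewrite Normc.normcM normc_a.
apply: sup_eq_max => [|r [l /eigM [->|->] ->]]; last 2 first.
- by rewrite Normc.normc0 mulr_ge0 ?normc_ge0.
- by rewrite Normc.normcM normc_a.
exists (a%:C%C * dot g f); last by rewrite Normc.normcM normc_a.
apply/eigenvalueP; exists (ctr f).
  by rewrite -scalemxAr mulmxA [ctr f *m g]mx11_scalar -dotE mul_scalar_mx scalerA.
apply: contra zn0 => /eqP f0; apply/eqP.
by rewrite dotE f0 mul0mx mxE Normc.normc0 mulr0.
Qed.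

End RankOne.

Lemma frameop_mul n N (F : 'I_N -> 'cV[C]_n) v :
  frameop F *m v = \sum_i dot v (F i) *: F i.
Proof.
rewrite /frameop mulmx_suml; apply: eq_bigr => i _.
by rewrite -mulmxA ctr_mulmx_col mul_mx_scalar.
Qed.

Lemma frameop_ctr n N (F : 'I_N -> 'cV[C]_n) : ctr (frameop F) = frameop F.
Proof. by rewrite /frameop ctr_sum; apply: eq_bigr => i _; rewrite ctrM ctrK. Qed.

Lemma dot_frameop n N (F : 'I_N -> 'cV[C]_n) v :
  dot (frameop F *m v) v = \sum_i (nc (dot v (F i)) ^+ 2)%:C%C.
Proof.
rewrite frameop_mul dot_suml; apply: eq_bigr => i _.
by rewrite dotZl [dot (F i) v]dotC mulcJ.
Qed.

Lemma is_frame_of_reconstruction isreal n N (F G : 'I_N -> 'cV[C]_n) :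
  is_frame isreal F -> (forall i, inH isreal (G i)) ->
  (forall f, inH isreal f -> f = \sum_i dot f (G i) *: F i) -> is_frame isreal G.
Proof.
move=> [_ [A [B [A0 [B0 AB]]]]] GH rec; split => //.
pose SG := \sum_i vnorm (G i) ^+ 2.
have SG0 : 0 <= SG by rewrite sumr_ge0 // => i _; rewrite sqr_ge0.
exists B^-1, (SG + 1); do 2![split; first by rewrite ?invr_gt0 ?ltr_wpDl].
move=> f fH; apply/andP; split; last first.
  rewrite mulrDl mul1r mulr_suml ler_wpDr ?sqr_ge0 // ler_sum // => i _.
  rewrite -exprMn mulrC ler_pXn2r ?nnegrE ?normc_ge0 ?mulr_ge0 ?vnorm_ge0 //.
  exact: CauchySchwarz.
set a := \col_i dot f (G i); set b := \col_i dot f (F i).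
have ab : vnorm f ^+ 2 <= vnorm a * vnorm b.
  rewrite -normc_dotvv {1}(rec f fH) dot_suml.
  rewrite (_ : \sum_i _ = dot a b) ?CauchySchwarz //.
  by apply: eq_bigr => i _; rewrite dotZl [dot (F i) f]dotC !mxE.
have vnorm_col (c : 'I_N -> C) : vnorm (\col_i c i) ^+ 2 = \sum_i nc (c i) ^+ 2.
  by rewrite vnorm_sqr; apply: eq_bigr => i _; rewrite mxE.
have /andP [_ bB] := AB f fH; rewrite -vnorm_col -/b in bB.
have aG : vnorm a ^+ 2 = \sum_i nc (dot f (G i)) ^+ 2 by rewrite vnorm_col.
rewrite -aG ler_pdivrMl //.
have [f0|fn0] := eqVneq (vnorm f) 0.
  by rewrite f0 expr0n /= mulr_ge0 ?sqr_ge0 ?ltW.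
have f2 : 0 < vnorm f ^+ 2 by rewrite exprn_gt0 // lt0r fn0 vnorm_ge0.
rewrite -(ler_pM2r f2) -expr2.
apply: le_trans (_ : (vnorm a * vnorm b) ^+ 2 <= _).
  by rewrite ler_pXn2r ?nnegrE ?sqr_ge0 ?mulr_ge0 ?vnorm_ge0.
rewrite exprMn [B * _]mulrC -[_ * B * _]mulrA.
by apply: ler_wpM2l; rewrite ?sqr_ge0.
Qed.

Section Frame.
Variables (isreal : bool) (n N : nat) (F : 'I_N -> 'cV[C]_n).
Hypothesis F_frame : is_frame isreal F.
Local Notation S := (frameop F).

Lemma frame_inH i : inH isreal (F i).
Proof. by case: F_frame. Qed.

Lemma realmx_frameop : isreal -> realmx S.
Proof.
move=> r; apply: realmx_sum => i _.
by have /inHP /(_ r) FR := frame_inH i; exact: realmxM FR (realmx_ctr FR).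
Qed.

Lemma frameop_inj v : inH isreal v -> S *m v = 0 -> v = 0.
Proof.
case: F_frame => _ [A [B [A0 [_ AB]]]] vH Sv0.
have := dot_frameop F v; rewrite Sv0 dot0l -rmorph_sum => /complexI /esym sum0.
have /andP [Av _] := AB v vH; rewrite sum0 in Av.
apply: vnorm_eq0; apply/eqP; rewrite -sqrf_eq0 eq_le sqr_ge0 andbT.
by rewrite -(ler_pM2l A0) mulr0.
Qed.

Lemma frameop_unit : S \in unitmx.
Proof.
case: (boolP isreal) => r; last first.
  by apply: unitmx_of_ker0 => v; apply: frameop_inj; rewrite /inH (negPf r).
have [S' SE] := realmx_frameop r; rewrite SE map_unitmx; apply: unitmx_of_ker0 => v Sv0.
apply: (@map_mx_inj _ _ rc); rewrite map_mx0; apply: frameop_inj.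
  by apply/inHP => _; exists v.
by rewrite SE -map_mxM Sv0 map_mx0.
Qed.

Lemma candual_inH i : inH isreal (candual F i).
Proof.
apply/inHP => r; apply: realmxM; first exact/realmx_invmx/realmx_frameop.
by move/inHP: (frame_inH i); apply.
Qed.

Lemma candual_synthesis f : \sum_i dot f (F i) *: candual F i = f.
Proof.
under eq_bigr do rewrite scalemxAr.
by rewrite -mulmx_sumr -frameop_mul mulKmx // frameop_unit.
Qed.

Lemma candual_analysis f : \sum_i dot f (candual F i) *: F i = f.
Proof.
under eq_bigr do rewrite dot_mulmxr ctr_invmx frameop_ctr.
by rewrite -frameop_mul mulKVmx // frameop_unit.
Qed.

Lemma candual_dual : is_dual isreal F (candual F).
Proof.
split; last by move=> f _; rewrite candual_synthesis candual_analysis.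
by apply: (is_frame_of_reconstruction F_frame candual_inH) => f _; rewrite candual_analysis.
Qed.

Lemma candual_add_relation_dual (c : 'I_N -> C) (h : 'cV[C]_n) :
  (forall i, scal isreal (c i)) -> \sum_i c i *: F i = 0 -> inH isreal h ->
  is_dual isreal F (fun i => candual F i + conjc (c i) *: h).
Proof.
move=> cS c0 hH; set G := fun i => _.
have synth f : \sum_i dot f (F i) *: G i = f.
  under eq_bigr do rewrite scalerDr scalerA.
  rewrite big_split /= candual_synthesis -scaler_suml.
  suff -> : \sum_i dot f (F i) * conjc (c i) = 0 by rewrite scale0r addr0.
  rewrite -[LHS]conjcK rmorph_sum /=.
  under eq_bigr do rewrite rmorphM /= conjcK -dotC mulrC -dotZl.
  by rewrite -dot_suml c0 dot0l conjc0.
have anal f : \sum_i dot f (G i) *: F i = f.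
  under eq_bigr do rewrite dotDr dotZr conjcK scalerDl mulrC -scalerA.
  by rewrite big_split /= candual_analysis -scaler_sumr c0 scaler0 addr0.
split; last by move=> f _; rewrite synth anal.
apply: is_frame_of_reconstruction F_frame _ (fun f _ => esym (anal f)) => i.
apply/inHP => r; apply: realmxD; first by move/inHP: (candual_inH i); apply.
have /scalP /(_ r) [x ->] := cS i; rewrite conjc_real; apply: realmxZ.
by move/inHP: hH; apply.
Qed.

End Frame.

Lemma exists_scal_relation isreal n N (F : 'I_N -> 'cV[C]_n) : (n < N)%N ->
  (forall i, inH isreal (F i)) ->
  exists c : 'I_N -> C, [/\ forall i, scal isreal (c i), exists i, c i != 0
                          & \sum_i c i *: F i = 0].
Proof.
move=> nN; case: isreal => FH; last first.
  by have [c [c0 rel]] := exists_nontrivial_relation F nN; exists c; split.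
pose F' i := map_mx (@complex.Re R) (F i).
have FE i : F i = map_mx rc (F' i).
  rewrite /F'; have /inHP /(_ isT) [v ->] := FH i.
  by apply/matrixP => k l; rewrite !mxE.
have [c [[i ci0] rel]] := exists_nontrivial_relation F' nN.
exists (fun i => (c i)%:C%C); split => [j||]; first exact: scal_real.
  by exists i; apply: contra ci0 => /eqP [->].
under eq_bigr do rewrite FE -map_mxZ.
by rewrite -map_mx_sum rel map_mx0.
Qed.

Lemma linindep_neq0 isreal n N (F : 'I_N -> 'cV[C]_n) L i :
  linindep isreal F L -> i \in L -> F i != 0.
Proof.
move=> Lfree iL; apply/eqP => Fi0.
have /eqP : ((i == i)%:R : C) = 0.
  apply: (Lfree (fun j => (j == i)%:R) _ _ i iL) => [j|].
    by rewrite -(rmorph_nat rc); exact: scal_real.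
  rewrite (bigD1 i) //= Fi0 scaler0 add0r big1 // => j /andP [_ /negPf ->].
  by rewrite scale0r.
by rewrite eqxx oner_eq0.
Qed.

Lemma weight_ge0 n N (p : 'I_N -> R) i : is_prob_seq p -> 0 <= weight n p i.
Proof.
rewrite /weight => -[/(_ i) /andP [_ pi1] ->]; apply: mulr_ge0; last by rewrite divr_ge0.
by rewrite div1r invr_ge0 subr_ge0.
Qed.

Section ErasureCost.
Variables (isreal : bool) (n N : nat) (q : 'I_N -> R) (F : 'I_N -> 'cV[C]_n).

Definition erasure_cost (G : 'I_N -> 'cV[C]_n) i :=
  (opnorm isreal (errop q F G [set i]) + specrad (errop q F G [set i])) / 2.

Lemma erasure_cost_eq G G' i : G i = G' i -> erasure_cost G i = erasure_cost G' i.
Proof. by rewrite /erasure_cost /errop !big_set1 => ->. Qed.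

Lemma AP1_ge0 G : 0 <= AP1 isreal q F G.
Proof. exact: bigmax_ge_id. Qed.

Lemma erasure_cost_le_AP1 G i : erasure_cost G i <= AP1 isreal q F G.
Proof. by rewrite /AP1 (bigD1 [set i]) ?cards1 //= le_max lexx. Qed.

Lemma AP1_le G x : 0 <= x -> (forall i, erasure_cost G i <= x) -> AP1 isreal q F G <= x.
Proof. by move=> x0 Gx; apply: bigmax_le => // L /cards1P [i ->]; exact: Gx. Qed.

Hypotheses (q_ge0 : forall i, 0 <= q i) (F_inH : forall i, inH isreal (F i)).

Lemma erasure_costE G i : erasure_cost G i =
  (q i * vnorm (G i) * vnorm (F i) + q i * nc (dot (G i) (F i))) / 2.
Proof. by rewrite /erasure_cost /errop big_set1 opnorm_rank1 // specrad_rank1. Qed.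

Lemma erasure_cost_le G G' i :
  erasure_cost G' i <= erasure_cost G i + q i * vnorm (G' i - G i) * vnorm (F i).
Proof.
set d := G' i - G i; have G'E : G' i = G i + d by rewrite /d addrC subrK.
rewrite !erasure_costE G'E ler_pdivrMr // mulrDl divfK ?pnatr_eq0 //.
have q0 := q_ge0 i; have F0 := vnorm_ge0 (F i).
have opB : q i * vnorm (G i + d) * vnorm (F i) <=
           q i * vnorm (G i) * vnorm (F i) + q i * vnorm d * vnorm (F i).
  by rewrite -mulrDl -mulrDr ler_wpM2r // ler_wpM2l // vnormD.
have spB : q i * nc (dot (G i + d) (F i)) <=
           q i * nc (dot (G i) (F i)) + q i * vnorm d * vnorm (F i).
  rewrite -mulrA -mulrDr ler_wpM2l // dotDl.
  by apply: le_trans (le_normcD _ _) _; rewrite lerD2l CauchySchwarz.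
have : 0 <= q i * vnorm d * vnorm (F i) by rewrite !mulr_ge0 ?vnorm_ge0.
lra.
Qed.

End ErasureCost.

Section OptimalDuals.
Variables (isreal : bool) (n N : nat) (F : 'I_N -> 'cV[C]_n) (p : 'I_N -> R) (P : 'M[C]_n).
Hypotheses (F_frame : is_frame isreal F) (p_prob : is_prob_seq p).
Hypotheses (P_psd : psd P) (P_sqrt : P *m P = invmx (frameop F)).

Let q := weight n p.
Let val i := q i * vnorm (P *m F i) ^+ 2
             + q i * vnorm (F i) * vnorm (invmx (frameop F) *m F i).
Let l := \big[Num.max/0]_i val i.
Let L1 := [set i | val i == l].
Let L2 := ~: L1.

Hypothesis L1_L2_indep :
  forall v, inspan isreal F L1 v -> inspan isreal F L2 v -> v = 0.
Hypothesis L1_free : linindep isreal F L1.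

Let q_ge0 i : 0 <= q i := weight_ge0 n i p_prob.
Let F_inH := frame_inH F_frame.

Lemma val_ge0 i : 0 <= val i.
Proof.
have qi := q_ge0 i; apply: addr_ge0; first exact: mulr_ge0 qi (sqr_ge0 _).
exact: mulr_ge0 (mulr_ge0 qi (vnorm_ge0 _)) (vnorm_ge0 _).
Qed.

Lemma val_le_max i : val i <= l.
Proof. exact: (le_bigmax 0%R val i). Qed.

Lemma l_ge0 : 0 <= l.
Proof. exact: bigmax_ge_id. Qed.

Lemma arg_max_val_in_L1 (j : 'I_N) : [arg max_(i > j) val i]%O \in L1.
Proof. by rewrite inE /l (bigmax_eq_arg 0%R j) // => i _; exact: val_ge0. Qed.

Lemma erasure_cost_candual i : erasure_cost isreal q F (candual F) i = val i / 2.
Proof.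
rewrite (erasure_costE q_ge0 F_inH) /val mulrAC addrC; congr ((q i * _ + _) / 2).
by rewrite /candual -P_sqrt -mulmxA dot_mulmxl; case: P_psd => -> _; rewrite normc_dotvv.
Qed.

Lemma relation_eq0_on_L1 c : (forall j, scal isreal (c j)) -> \sum_j c j *: F j = 0 ->
  {in L1, forall i, c i = 0}.
Proof.
move=> cS c0 i iL1; apply: (L1_free cS _ iL1); apply: L1_L2_indep; first by exists c.
exists (fun j => - c j); split => [j|]; first exact: scalN.
move: c0; rewrite (bigID (mem L1)) /= => /eqP; rewrite addr_eq0 => /eqP ->.
rewrite -sumrN; apply: eq_big => [j|j _]; first by rewrite finset.in_setC.
by rewrite scaleNr.
Qed.

Lemma dual_eq_candual_on_L1 G : is_dual isreal F G -> {in L1, forall i, G i = candual F i}.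
Proof.
move=> [[GH _] Grec] i iL1; apply/eqP; rewrite -subr_eq0; apply/eqP.
have dH j : inH isreal (G j - candual F j).
  apply/inHP => r; apply: realmxB; first by move/inHP: (GH j); apply.
  by move/inHP: (candual_inH F_frame j); apply.
pose u := G i - candual F i.
have rel : \sum_j dot u (G j - candual F j) *: F j = 0.
  under eq_bigr do rewrite dotBr scalerBl.
  by rewrite sumrB -(proj2 (Grec u (dH i))) (candual_analysis F_frame) subrr.
have cS j : scal isreal (dot u (G j - candual F j)) := scal_dot (dH i) (dH j).
exact: dotvv_eq0 (relation_eq0_on_L1 cS rel iL1).
Qed.

Lemma AP1_dual_ge G : is_dual isreal F G -> l / 2 <= AP1 isreal q F G.
Proof.
move=> Gd; case: (pickP (@predT 'I_N)) => [j _|noN]; last first.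
  by rewrite /l big_pred0 // mul0r AP1_ge0.
have i0L1 := arg_max_val_in_L1 j; move: (i0L1); rewrite inE => /eqP <-.
rewrite -erasure_cost_candual -(erasure_cost_eq _ _ _ (dual_eq_candual_on_L1 Gd i0L1)).
exact: erasure_cost_le_AP1.
Qed.

Lemma AP1_candual_le : AP1 isreal q F (candual F) <= l / 2.
Proof.
apply: AP1_le => [|i]; first by rewrite divr_ge0 ?l_ge0.
by rewrite erasure_cost_candual ler_pM2r ?invr_gt0 ?ltr0n ?val_le_max.
Qed.

Lemma PASOD1_of_AP1_le G : is_dual isreal F G -> AP1 isreal q F G <= l / 2 ->
  PASOD1 isreal q F G.
Proof. by move=> Gd Gl; split=> [|G' /AP1_dual_ge]; [exact: Gd | exact: le_trans Gl]. Qed.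

Lemma erasure_cost_candual_add (x : 'I_N -> C) h i :
  erasure_cost isreal q F (fun j => candual F j + x j *: h) i <=
  val i / 2 + q i * nc (x i) * vnorm h * vnorm (F i).
Proof.
apply: le_trans (erasure_cost_le q_ge0 F_inH (candual F) _ i) _.
by rewrite erasure_cost_candual [candual F i + _]addrC addrK vnormZ !mulrA.
Qed.

Lemma AP1_candual_add_le (x : 'I_N -> C) h :
  {in L1, forall i, x i = 0} ->
  (forall i, i \notin L1 -> q i * nc (x i) * vnorm h * vnorm (F i) <= (l - val i) / 2) ->
  AP1 isreal q F (fun i => candual F i + x i *: h) <= l / 2.
Proof.
move=> x0 x_small; apply: AP1_le => [|i]; first by rewrite divr_ge0 ?l_ge0.
apply: le_trans (erasure_cost_candual_add x h i) _.
have [iL1|iL2] := boolP (i \in L1).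
  rewrite x0 // Normc.normc0 !(mulr0, mul0r) addr0.
  by move: iL1; rewrite inE => /eqP ->.
by have := x_small i iL2; lra.
Qed.

Lemma exists_noncanonical_PASOD1 : (n < N)%N ->
  exists G, PASOD1 isreal q F G /\ exists i, G i != candual F i.
Proof.
move=> nN; have [c [cS [j cj0] c0]] := exists_scal_relation nN F_inH.
have cL1 := relation_eq0_on_L1 cS c0.
pose h := F [arg max_(i > j) val i]%O.
have h0 : h != 0 := linindep_neq0 L1_free (arg_max_val_in_L1 j).
have [e e0 e_small] : exists2 e : R, 0 < e & forall i, i \notin L1 ->
    e * (q i * nc (c i) * vnorm h * vnorm (F i)) <= (l - val i) / 2.
  apply: exists_pos_mul_le => i; rewrite inE => vil.
  rewrite divr_gt0 ?ltr0n // subr_gt0 lt_neqAle val_le_max andbT.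
  by apply: contra vil => /eqP ->.
pose x i := conjc (e%:C%C * c i).
have Gd : is_dual isreal F (fun i => candual F i + x i *: h).
  apply: (candual_add_relation_dual F_frame (c := fun i => e%:C%C * c i)) (F_inH _) => [i|].
    exact: scalM (scal_real _ e) (cS i).
  by under eq_bigr do rewrite -scalerA; rewrite -scaler_sumr c0 scaler0.
exists (fun i => candual F i + x i *: h); split.
  apply: PASOD1_of_AP1_le Gd (AP1_candual_add_le _ _) => [i iL1|i iL2].
    by rewrite /x cL1 // mulr0 conjc0.
  rewrite /x normc_conj Normc.normcM normc_real (ger0_norm (ltW e0)) mulrCA -!mulrA.
  by move: (e_small i iL2); rewrite -!mulrA.
exists j; rewrite addrC -subr_eq0 addrK scaler_eq0 negb_or h0 andbT conjc_eq0 mulf_eq0.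
by rewrite negb_or cj0 andbT -(rmorph0 rc) inj_eq ?lt0r_neq0 //; exact: complexI.
Qed.

End OptimalDuals.

End ComplexFrames.

Theorem theorem3p9 (R : realType) (isreal : bool) (n N : nat)
  (F : 'I_N -> 'cV[R[i]]_n) (p : 'I_N -> R)
  (P : 'M[R[i]]_n) (* P = S_F^{-1/2} *) :
  is_frame isreal F ->
  is_prob_seq p ->
  (forall i, p i < 1) ->
  psd P -> P *m P = invmx (frameop F) ->
  let q := weight n p in
  let val := fun i : 'I_N =>
    q i * vnorm (P *m F i) ^+ 2
    + q i * vnorm (F i) * vnorm (invmx (frameop F) *m F i) in
  let l := \big[Num.max/0]_(i : 'I_N) val i in
  let L1 := [set i : 'I_N | val i == l] in
  let L2 := ~: L1 in
  (forall v : 'cV[R[i]]_n, inspan isreal F L1 v -> inspan isreal F L2 v -> v = 0) ->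
  linindep isreal F L1 ->
  PASOD1 isreal q F (candual F) /\
  ((n < N)%N -> exists G : 'I_N -> 'cV[R[i]]_n,
                  PASOD1 isreal q F G /\ exists i, G i != candual F i).
Proof.
(* [p i < 1] only rules out the junk weight [1 / 0 = 0]: the weights are
   nonnegative without it. *)
move=> F_frame p_prob _ P_psd P_sqrt q val l L1 L2 L1_L2_indep L1_free; split.
  apply: (PASOD1_of_AP1_le F_frame p_prob P_psd P_sqrt L1_L2_indep L1_free).
    exact: candual_dual.
  exact: AP1_candual_le.
exact: (exists_noncanonical_PASOD1 F_frame p_prob P_psd P_sqrt L1_L2_indep L1_free).
Qed.
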